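(* Let $C_1\subseteq V^n$ and $C_2\subseteq V^m$ be irreducible closed sets in the PQF-topology. Then $C_1\times C_2$ is irreducible (in the PQF-topology on $V^{n+m}$).
   Context: $F$ is an algebraically closed field of characteristic $0$, $V$ a vector space over $\mathbb{Q}$, and $\exp:(V,+)\to(F^*,\cdot)$ a surjective group homomorphism with kernel $K\cong\mathbb{Z}$. The structure $V$ is considered in the language $\{0,+,(f_q)_{q\in\mathbb{Q}},R_+,R_0\}$ where $f_q$ is scalar multiplication by $q$, $R_+(v_1,v_2,v_3)$ iff $\exp(v_1)+\exp(v_2)=\exp(v_3)$ and $R_0(v_1,v_2)$ iff $\exp(v_1)+\exp(v_2)=0$. The PQF-topology on $V^n$: the basic closed sets are the subsets of $V^n$ definable by positive (negation-free) quantifier-free first-order formulas with parameters; closed sets are intersections of basic closed sets. A nonempty closed set is irreducible if it is not the union of two proper closed subsets. *)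

From mathcomp Require Import all_boot all_order all_algebra.
Set Implicit Arguments. Unset Strict Implicit. Unset Printing Implicit Defensive.
Import Order.TTheory GRing.Theory Num.Theory.
Local Open Scope ring_scope.

(* Language {0, +, (f_q)_{q in Q}, R_+, R_0} with parameters from V.
   Terms in n variables x_0..x_{n-1}. *)
Inductive pterm (V : Type) (n : nat) : Type :=
| PVar : 'I_n -> pterm V n
| PPar : V -> pterm V n
| PZero : pterm V n
| PAdd : pterm V n -> pterm V n -> pterm V n
| PScale : rat -> pterm V n -> pterm V n.

(* Positive (negation-free) quantifier-free formulas. *)
Inductive pqf (V : Type) (n : nat) : Type :=
| PQTrue : pqf V n
| PQFalse : pqf V n
| PQEq : pterm V n -> pterm V n -> pqf V n
| PQRplus : pterm V n -> pterm V n -> pterm V n -> pqf V n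
| PQRzero : pterm V n -> pterm V n -> pqf V n
| PQAnd : pqf V n -> pqf V n -> pqf V n
| PQOr : pqf V n -> pqf V n -> pqf V n.

Section Semantics.
Variables (F : fieldType) (V : lmodType rat) (exp : V -> F).

Fixpoint pterm_eval n (t : pterm V n) (x : 'I_n -> V) : V :=
  match t with
  | PVar i => x i
  | PPar v => v
  | PZero => 0
  | PAdd t1 t2 => pterm_eval t1 x + pterm_eval t2 x
  | PScale q t1 => q *: pterm_eval t1 x
  end.

Fixpoint pqf_holds n (phi : pqf V n) (x : 'I_n -> V) : Prop :=
  match phi with
  | PQTrue => True
  | PQFalse => False
  | PQEq t1 t2 => pterm_eval t1 x = pterm_eval t2 x
  | PQRplus t1 t2 t3 =>
      exp (pterm_eval t1 x) + exp (pterm_eval t2 x) = exp (pterm_eval t3 x)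
  | PQRzero t1 t2 => exp (pterm_eval t1 x) + exp (pterm_eval t2 x) = 0
  | PQAnd f g => pqf_holds f x /\ pqf_holds g x
  | PQOr f g => pqf_holds f x \/ pqf_holds g x
  end.

Definition pqf_closed n (C : ('I_n -> V) -> Prop) : Prop :=
  exists S : pqf V n -> Prop,
    forall x, C x <-> (forall phi, S phi -> pqf_holds phi x).

Definition pqf_irreducible n (C : ('I_n -> V) -> Prop) : Prop :=
  (exists x, C x) /\ pqf_closed C /\
  forall A B : ('I_n -> V) -> Prop,
    pqf_closed A -> pqf_closed B ->
    (forall x, A x -> C x) -> (forall x, B x -> C x) ->
    (forall x, C x <-> (A x \/ B x)) ->
    (forall x, A x <-> C x) \/ (forall x, B x <-> C x).

End Semantics.

Definition prod_set (V : Type) n m (C1 : ('I_n -> V) -> Prop)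
    (C2 : ('I_m -> V) -> Prop) : ('I_(n + m) -> V) -> Prop :=
  fun x => C1 (fun i => x (lshift m i)) /\ C2 (fun j => x (rshift n j)).

From mathcomp Require Import all_boot all_order all_algebra.
From Stdlib Require Import Setoid FunctionalExtensionality.
Import Order.TTheory GRing.Theory Num.Theory.
Set Implicit Arguments. Unset Strict Implicit.
Local Open Scope ring_scope.

(* The argument is purely topological.
   Substituting parameters for some variables shows that the slices
   {y | (x, y) in A} of a closed set A are closed, and so is
   A1 := {x in C1 | {x} x C2 <= A}, being an intersection of slices.  If
   C1 x C2 = A u B with A, B closed, irreducibility of C2 applied to the slice
   over each x in C1 gives C1 = A1 u B1, and irreducibility of C1 then gives
   C1 = A1 or C1 = B1, i.e. C1 x C2 = A or C1 x C2 = B. *)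

Section Substitution.
Variables (F : fieldType) (V : lmodType rat) (exp : V -> F).

Fixpoint pterm_subst k l (t : pterm V k) (s : 'I_k -> pterm V l) : pterm V l :=
  match t with
  | PVar i => s i
  | PPar v => PPar l v
  | PZero => PZero V l
  | PAdd a b => PAdd (pterm_subst a s) (pterm_subst b s)
  | PScale q a => PScale q (pterm_subst a s)
  end.

Fixpoint pqf_subst k l (f : pqf V k) (s : 'I_k -> pterm V l) : pqf V l :=
  match f with
  | PQTrue => PQTrue V l
  | PQFalse => PQFalse V l
  | PQEq a b => PQEq (pterm_subst a s) (pterm_subst b s)
  | PQRplus a b c => PQRplus (pterm_subst a s) (pterm_subst b s) (pterm_subst c s)
  | PQRzero a b => PQRzero (pterm_subst a s) (pterm_subst b s)
  | PQAnd f g => PQAnd (pqf_subst f s) (pqf_subst g s)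
  | PQOr f g => PQOr (pqf_subst f s) (pqf_subst g s)
  end.

Lemma pterm_eval_subst k l (t : pterm V k) (s : 'I_k -> pterm V l) y :
  pterm_eval (pterm_subst t s) y = pterm_eval t (fun i => pterm_eval (s i) y).
Proof. by elim: t => //= [a -> b ->|q a ->]. Qed.

Lemma pqf_holds_subst k l (f : pqf V k) (s : 'I_k -> pterm V l) y :
  pqf_holds exp (pqf_subst f s) y <->
  pqf_holds exp f (fun i => pterm_eval (s i) y).
Proof.
elim: f => //= [a b|a b c|a b|f IHf g IHg|f IHf g IHg];
  rewrite ?pterm_eval_subst //; move: IHf IHg; tauto.
Qed.

Lemma pqf_closed_ext k (A B : ('I_k -> V) -> Prop) :
  (forall x, A x <-> B x) -> pqf_closed exp A -> pqf_closed exp B.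
Proof. by move=> AB [S HS]; exists S => x; split=> [/AB/HS|/HS/AB]. Qed.

Lemma pqf_closedP k (A : ('I_k -> V) -> Prop) :
  pqf_closed exp A <->
  forall x, (forall phi, (forall y, A y -> pqf_holds exp phi y) ->
                         pqf_holds exp phi x) -> A x.
Proof.
split=> [[S HS] x Hx|HA].
  by apply/HS => phi Sphi; apply: Hx => y /HS; apply.
exists (fun phi => forall y, A y -> pqf_holds exp phi y) => x.
by split=> [Ax phi /(_ x Ax)|/HA].
Qed.

Lemma pqf_closed_bigcap k I (A : I -> ('I_k -> V) -> Prop) :
  (forall i, pqf_closed exp (A i)) ->
  pqf_closed exp (fun x => forall i, A i x).
Proof.
move=> clA; apply/pqf_closedP => x Hx i.
have /pqf_closedP clAi := clA i; apply: clAi => phi Hphi.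
by apply: Hx => z /(_ i) /Hphi.
Qed.

Lemma pqf_closedI k (A B : ('I_k -> V) -> Prop) :
  pqf_closed exp A -> pqf_closed exp B -> pqf_closed exp (fun x => A x /\ B x).
Proof.
move=> clA clB.
have clAB (b : bool) : pqf_closed exp (if b then A else B) by case: b.
apply: pqf_closed_ext (pqf_closed_bigcap clAB) => x /=.
by split=> [H|[Ax Bx] []]; [split; [apply: (H true)|apply: (H false)]|..].
Qed.

Lemma pqf_closed_preimage k l (A : ('I_k -> V) -> Prop)
    (f : ('I_l -> V) -> 'I_k -> V) (s : 'I_k -> pterm V l) :
  (forall y i, f y i = pterm_eval (s i) y) ->
  pqf_closed exp A -> pqf_closed exp (fun y => A (f y)).
Proof.
move=> fE [S HS].
exists (fun psi => exists2 phi, S phi & psi = pqf_subst phi s) => y.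
have -> : f y = (fun i => pterm_eval (s i) y) by apply: functional_extensionality.
split=> [/HS H psi [phi Sphi ->]|H]; first by apply/pqf_holds_subst; apply: H.
by apply/HS => phi Sphi; apply/pqf_holds_subst; apply: H; exists phi.
Qed.

End Substitution.

Definition join (T : Type) n m (x : 'I_n -> T) (y : 'I_m -> T) : 'I_(n + m) -> T :=
  fun i => match split i with inl a => x a | inr b => y b end.

Lemma join_lshift (T : Type) n m (x : 'I_n -> T) (y : 'I_m -> T) :
  (fun i => join x y (lshift m i)) = x.
Proof.
apply: functional_extensionality => i; rewrite /join.
by have := unsplitK (inl _ i : 'I_n + 'I_m) => /= ->.
Qed.

Lemma join_rshift (T : Type) n m (x : 'I_n -> T) (y : 'I_m -> T) :
  (fun j => join x y (rshift n j)) = y.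
Proof.
apply: functional_extensionality => j; rewrite /join.
by have := unsplitK (inr _ j : 'I_n + 'I_m) => /= ->.
Qed.

Lemma join_shiftK (T : Type) n m (z : 'I_(n + m) -> T) :
  join (fun i => z (lshift m i)) (fun j => z (rshift n j)) = z.
Proof.
apply: functional_extensionality => i; rewrite /join.
by rewrite -[in RHS](splitK i); case: (split i).
Qed.

Lemma prod_set_join (T : Type) n m (C1 : ('I_n -> T) -> Prop)
    (C2 : ('I_m -> T) -> Prop) x y :
  prod_set C1 C2 (join x y) <-> C1 x /\ C2 y.
Proof. by rewrite /prod_set join_lshift join_rshift. Qed.

Section Slices.
Variables (F : fieldType) (V : lmodType rat) (exp : V -> F) (n m : nat).
Implicit Types (A : ('I_(n + m) -> V) -> Prop) (x : 'I_n -> V) (y : 'I_m -> V).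

Lemma pqf_closed_slicer A x :
  pqf_closed exp A -> pqf_closed exp (fun y => A (join x y)).
Proof.
apply: (pqf_closed_preimage (s := fun i => match split i with
          inl a => PPar m (x a) | inr b => PVar V b end)) => y i.
by rewrite /join; case: (split i).
Qed.

Lemma pqf_closed_slicel A y :
  pqf_closed exp A -> pqf_closed exp (fun x => A (join x y)).
Proof.
apply: (pqf_closed_preimage (s := fun i => match split i with
          inl a => PVar V a | inr b => PPar n (y b) end)) => x i.
by rewrite /join; case: (split i).
Qed.

Lemma pqf_closed_prod_set (C1 : ('I_n -> V) -> Prop) (C2 : ('I_m -> V) -> Prop) :
  pqf_closed exp C1 -> pqf_closed exp C2 -> pqf_closed exp (prod_set C1 C2).
Proof.
move=> /(pqf_closed_preimage (s := fun i => PVar V (lshift m i))) cl1.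
move=> /(pqf_closed_preimage (s := fun j => PVar V (rshift n j))) cl2.
exact: pqf_closedI (cl1 _ (fun _ _ => erefl)) (cl2 _ (fun _ _ => erefl)).
Qed.

Lemma pqf_closed_fibre_subset A (C2 : ('I_m -> V) -> Prop) :
  pqf_closed exp A -> pqf_closed exp (fun x => forall y, C2 y -> A (join x y)).
Proof.
move=> clA; have := @pqf_closed_bigcap _ _ exp n {y | C2 y}
  (fun c x => A (join x (proj1_sig c))) (fun c => pqf_closed_slicel _ clA).
apply: pqf_closed_ext => x.
by split=> [H y Cy|H [y Cy]]; [apply: (H (exist _ y Cy))|apply: H].
Qed.

Lemma irreducible_fibre_cover (C1 : ('I_n -> V) -> Prop)
    (C2 : ('I_m -> V) -> Prop) A B x :
  pqf_irreducible exp C2 -> pqf_closed exp A -> pqf_closed exp B ->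
  (forall z, A z -> prod_set C1 C2 z) -> (forall z, B z -> prod_set C1 C2 z) ->
  (forall z, prod_set C1 C2 z <-> A z \/ B z) -> C1 x ->
  (forall y, C2 y -> A (join x y)) \/ (forall y, C2 y -> B (join x y)).
Proof.
move=> [_ [_ irr2]] clA clB AC BC CAB C1x.
have [] := irr2 (fun y => A (join x y)) (fun y => B (join x y))
  (pqf_closed_slicer _ clA) (pqf_closed_slicer _ clB).
- by move=> y /AC /prod_set_join [].
- by move=> y /BC /prod_set_join [].
- by move=> y; rewrite -CAB prod_set_join; tauto.
- by move=> H; left => y /H.
- by move=> H; right => y /H.
Qed.

End Slices.

Theorem lemma5p17
  (F : closedFieldType) (charF0 : [pchar F] =i pred0)
  (V : lmodType rat) (exp : V -> F)
  (exp_hom : forall u v : V, exp (u + v) = exp u * exp v)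
  (exp_nz : forall v : V, exp v != 0)
  (exp_surj : forall y : F, y != 0 -> exists v : V, exp v = y)
  (exp_ker : exists k : V, k != 0 /\
     forall v : V, exp v = 1 <-> exists z : int, v = k *~ z)
  (n m : nat) (C1 : ('I_n -> V) -> Prop) (C2 : ('I_m -> V) -> Prop) :
  pqf_irreducible exp C1 -> pqf_irreducible exp C2 ->
  pqf_irreducible exp (prod_set C1 C2).
Proof.
move=> irr1 irr2; have [[x0 C1x0] [cl1 split1]] := irr1.
have [[y0 C2y0] [cl2 _]] := irr2.
split; first by exists (join x0 y0); apply/prod_set_join.
split=> [|A B clA clB AC BC CAB]; first exact: pqf_closed_prod_set.
pose fibre D x := C1 x /\ forall y, C2 y -> D (join x y).
have clfibre D : pqf_closed exp D -> pqf_closed exp (fibre D).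
  by move=> clD; apply: pqf_closedI cl1 (pqf_closed_fibre_subset _ clD).
have fibre_full D : (forall z, D z -> prod_set C1 C2 z) ->
    (forall x, fibre D x <-> C1 x) -> forall z, D z <-> prod_set C1 C2 z.
  move=> DC H z; split=> [/DC //|[/H [_ /[apply]]]].
  by rewrite join_shiftK.
have [] := split1 (fibre A) (fibre B) (clfibre _ clA) (clfibre _ clB).
- by move=> x [].
- by move=> x [].
- move=> x; split=> [C1x|[] [] //].
  by have [] := irreducible_fibre_cover irr2 clA clB AC BC CAB C1x;
    [left|right].
- by move=> H; left; apply: fibre_full.
- by move=> H; right; apply: fibre_full.
Qed.
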